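(* Let $K\ge 2$, let $\mathcal{D}$ be a probability distribution on $\mathcal{X}\times\mathcal{Y}$ with $\mathcal{Y}=\{1,\dots,K\}$, and let $\rho$ be a probability distribution over classifiers $h:\mathcal{X}\to\mathcal{Y}$. Then $$\mathbb{E}_{h,h'\sim\rho}[L(h,h')]\;\le\;\frac{2(K-1)}{K}\Big(\mathbb{E}_{h\sim\rho}[L(h)]-\tfrac12\,\mathbb{E}_{h,h'\sim\rho}[D(h,h')]\Big),$$ where $h,h'$ are drawn independently from $\rho$.
   Context: The error rate is $L(h)=\mathbb{E}_{(X,Y)\sim\mathcal{D}}[\mathbb{1}(h(X)\neq Y)]$; the tandem loss is $L(h,h')=\mathbb{E}_{(X,Y)\sim\mathcal{D}}[\mathbb{1}(h(X)\neq Y)\mathbb{1}(h'(X)\neq Y)]$; the disagreement rate is $D(h,h')=\mathbb{E}_{X\sim\mathcal{D}}[\mathbb{1}(h(X)\neq h'(X))]$. *)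

From HB Require Import structures.
From mathcomp Require Import all_boot all_order all_algebra.
From mathcomp Require Import all_classical all_reals all_analysis.
Set Implicit Arguments. Unset Strict Implicit. Unset Printing Implicit Defensive.
Import Order.TTheory GRing.Theory Num.Theory.
Local Open Scope classical_set_scope.
Local Open Scope ring_scope.

(* Label set Y = {1,...,K} with K = k.+2 (i.e. K >= 2), represented by 'I_(k.+2),
   equipped with the discrete sigma-algebra. *)
Definition label (k : nat) : Type := 'I_k.+2.
HB.instance Definition _ k := Choice.on (label k).
HB.instance Definition _ k := isPointed.Build (label k) ord0.
HB.instance Definition _ k := @isMeasurable.Build default_measure_display
  (label k) discrete_measurable discrete_measurable0
  discrete_measurableC discrete_measurableU.

Local Open Scope ereal_scope.

Definition err_rate {dX} {X : measurableType dX} {k : nat} {R : realType}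
  (D : probability (X * label k)%type R) (h : X -> label k) : \bar R :=
  \int[D]_z ((h z.1 != z.2)%:R)%:E.

Definition tandem_loss {dX} {X : measurableType dX} {k : nat} {R : realType}
  (D : probability (X * label k)%type R) (h h' : X -> label k) : \bar R :=
  \int[D]_z ((h z.1 != z.2)%:R * (h' z.1 != z.2)%:R)%:E.

Definition disagreement {dX} {X : measurableType dX} {k : nat} {R : realType}
  (D : probability (X * label k)%type R) (h h' : X -> label k) : \bar R :=
  \int[D]_z ((h z.1 != h' z.1)%:R)%:E.

From HB Require Import structures.
From mathcomp Require Import all_boot all_order all_algebra.
From mathcomp Require Import all_classical all_reals all_analysis.
From mathcomp Require Import measurable_realfun ring lra.
Set Implicit Arguments.
Unset Strict Implicit.
Unset Printing Implicit Defensive.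
Import Order.TTheory GRing.Theory Num.Theory.
Local Open Scope classical_set_scope.
Local Open Scope ring_scope.

(* Fix a labelled point z = (x, y) and let m be the law of the vote h(x) for
   h ~ rho.  By Tonelli the rho-averaged error, tandem loss and disagreement
   become D-integrals of their values at z, namely 1 - m_y, (1 - m_y)^2 and
   1 - sum_j m_j^2.  With s = 1 - m_y and q = sum_(j <> y) m_j^2 the bound at z
   is equivalent to s^2 <= (K - 1) q, the Cauchy-Schwarz inequality over the
   K - 1 labels other than y; integrating over D gives the theorem. *)

Section pmf_losses.
Variables (R : realFieldType) (T : finType).
Implicit Types (m a : T -> R) (y : T).

Lemma sqr_sum_le_card_sum_sqr (A : {pred T}) a :
  (\sum_(i in A) a i) ^+ 2 <= #|A|%:R * \sum_(i in A) a i ^+ 2.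
Proof.
have sum_sqrB i : \sum_(j in A) (a i - a j) ^+ 2 =
    #|A|%:R * a i ^+ 2 + \sum_(j in A) a j ^+ 2 - 2 * a i * \sum_(j in A) a j.
  transitivity (\sum_(j in A) (a i ^+ 2 + a j ^+ 2 - 2 * a i * a j)).
    by apply: eq_bigr => j _; ring.
  by rewrite sumrB big_split /= sumr_const -mulr_sumr [#|A|%:R * _]mulr_natl.
have : 0 <= \sum_(i in A) \sum_(j in A) (a i - a j) ^+ 2.
  by do 2![apply: sumr_ge0 => ? _]; exact: sqr_ge0.
under eq_bigr do rewrite sum_sqrB.
rewrite sumrB big_split /= sumr_const -!mulr_sumr -mulr_suml -mulr_sumr.
rewrite -[(\sum_(j in A) _) *+ _]mulr_natl expr2.
lra.
Qed.

Lemma sum_neq_mul m y : \sum_j (j != y)%:R * m j = \sum_j m j - m y.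
Proof.
rewrite [in RHS](bigD1 y) //= addrC addrK (bigD1 y) //= eqxx mul0r add0r.
by apply: eq_bigr => j ->; rewrite mul1r.
Qed.

Definition pmf_err m y := \sum_j (j != y)%:R * m j.

Definition pmf_tandem m y :=
  \sum_i (\sum_j ((i != y)%:R * (j != y)%:R) * m j) * m i.

Definition pmf_disagreement m := \sum_i (\sum_j (i != j)%:R * m j) * m i.

Lemma natr_bool_in01 (b : bool) : 0 <= (b%:R : R) <= 1.
Proof. by rewrite ler0n lern1 leq_b1. Qed.

Lemma convex_comb_in01 m g : (forall j, 0 <= m j) -> \sum_j m j = 1 ->
  (forall j, 0 <= g j <= 1) -> 0 <= \sum_j g j * m j <= 1.
Proof.
move=> m0 m1 g01; apply/andP; split.
  by apply: sumr_ge0 => j _; have /andP[g0 _] := g01 j; rewrite mulr_ge0.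
rewrite -[leRHS]m1; apply: ler_sum => j _; have /andP[_ g1] := g01 j.
by rewrite ler_piMl.
Qed.

Lemma convex_comb2_in01 m (G : T -> T -> R) : (forall j, 0 <= m j) ->
  \sum_j m j = 1 -> (forall i j, 0 <= G i j <= 1) ->
  0 <= \sum_i (\sum_j G i j * m j) * m i <= 1.
Proof.
by move=> m0 m1 G01; apply: convex_comb_in01 => // i; exact: convex_comb_in01.
Qed.

Lemma pmf_errE m y : \sum_j m j = 1 -> pmf_err m y = 1 - m y.
Proof. by move=> m1; rewrite /pmf_err sum_neq_mul m1. Qed.

Lemma pmf_tandemE m y : pmf_tandem m y = pmf_err m y ^+ 2.
Proof.
rewrite expr2 {2}/pmf_err mulr_sumr; apply: eq_bigr => i _.
under eq_bigr do rewrite -mulrA.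
by rewrite -mulr_sumr mulrCA mulrA.
Qed.

Lemma pmf_disagreementE m : \sum_j m j = 1 ->
  pmf_disagreement m = 1 - \sum_j m j ^+ 2.
Proof.
move=> m1; transitivity (\sum_i (m i - m i ^+ 2)); last by rewrite sumrB m1.
apply: eq_bigr => i _; under eq_bigr do rewrite eq_sym.
by rewrite sum_neq_mul m1 mulrBl mul1r expr2.
Qed.

Lemma pmf_tandem_le m y : \sum_j m j = 1 ->
  pmf_tandem m y <=
  2 * (#|T| - 1)%:R / #|T|%:R * (pmf_err m y - 2^-1 * pmf_disagreement m).
Proof.
move=> m1.
have from_cauchy_schwarz n (s q : R) : s ^+ 2 <= n%:R * q ->
    s ^+ 2 <= 2 * n%:R / n.+1%:R * (s - 2^-1 * (1 - ((1 - s) ^+ 2 + q))).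
  have -> : 2 * n%:R / n.+1%:R * (s - 2^-1 * (1 - ((1 - s) ^+ 2 + q))) =
      s ^+ 2 + (n%:R * q - s ^+ 2) / n.+1%:R.
    by field; rewrite addrC natr1 pnatr_eq0.
  by move=> cs; rewrite lerDl divr_ge0 // subr_ge0.
have := sqr_sum_le_card_sum_sqr (predC1 y) m; rewrite cardC1.
have /prednK <- : (0 < #|T|)%N by apply/card_gt0P; exists y.
set s := \sum_(i in predC1 y) m i; set q := \sum_(i in predC1 y) m i ^+ 2.
have sE : m y = 1 - s by rewrite /s -m1 (bigD1 y) //= addrK.
have sqE : \sum_j m j ^+ 2 = m y ^+ 2 + q by rewrite (bigD1 y).
rewrite pmf_tandemE pmf_disagreementE // pmf_errE // sqE sE subn1 /=.
rewrite opprB addrC subrK; exact: from_cauchy_schwarz.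
Qed.

End pmf_losses.

Local Open Scope ereal_scope.

Definition fin_pmf {d} {H : measurableType d} {R : realType} {T : finType}
  (P : probability H R) (f : H -> T) (j : T) : R := fine (P (f @^-1` [set j])).

Section finite_valued_integral.
Context d (H : measurableType d) (R : realType) (T : finType).
Variables (P : probability H R) (f : H -> T).
Hypothesis mf : forall j, measurable (f @^-1` [set j]).

Lemma integral_fin_valued (g : T -> R) : (forall j, 0 <= g j)%R ->
  \int[P]_h (g (f h))%:E = (\sum_j g j * fin_pmf P f j)%:E.
Proof.
move=> g0.
have gfE h : (g (f h))%:E = \sum_j (g j)%:E * (\1_(f @^-1` [set j]) h)%:E.
  rewrite (bigD1 (f h)) //= indicE mem_set // mule1 big1 ?adde0 // => j fhj.
  by rewrite indicE memNset ?mule0 //= => /esym/eqP; rewrite (negbTE fhj).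
under eq_integral do rewrite gfE.
rewrite ge0_integral_sum //; last 2 first.
- by move=> j; apply/measurable_EFinP/measurable_funM => //;
    exact: measurable_indic.
- by move=> j h _; rewrite -EFinM lee_fin mulr_ge0.
rewrite -sumEFin; apply: eq_bigr => j _.
rewrite ge0_integralZl_EFin //; last exact/measurable_EFinP/measurable_indic.
by rewrite integral_indic // setIT /fin_pmf EFinM fineK ?fin_num_measure.
Qed.

Lemma fin_pmf_ge0 j : (0 <= fin_pmf P f j)%R.
Proof. exact/fine_ge0/measure_ge0. Qed.

Lemma sum_fin_pmf : (\sum_j fin_pmf P f j)%R = 1%R.
Proof.
apply: EFin_inj; under eq_bigr do rewrite -[fin_pmf _ _ _]mul1r.
rewrite -(@integral_fin_valued (fun=> 1%R)) // integral_cst // mul1e.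
exact: probability_setT.
Qed.

Lemma integral2_fin_valued (G : T -> T -> R) : (forall i j, 0 <= G i j)%R ->
  \int[P]_h \int[P]_h' (G (f h) (f h'))%:E =
  (\sum_i (\sum_j G i j * fin_pmf P f j) * fin_pmf P f i)%:E.
Proof.
move=> G0; under eq_integral do rewrite integral_fin_valued //.
apply: integral_fin_valued => i.
by apply: sumr_ge0 => j _; rewrite mulr_ge0 // fin_pmf_ge0.
Qed.

End finite_valued_integral.

Section iterated_fubini_tonelli.
Context d1 d2 (T1 : measurableType d1) (T2 : measurableType d2) (R : realType).
Variables (m1 : {sigma_finite_measure set T1 -> \bar R})
  (m2 : {sigma_finite_measure set T2 -> \bar R}).
Variable f : T1 * T1 * T2 -> \bar R.
Hypotheses (mf : measurable_fun setT f) (f0 : forall q, 0 <= f q).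

Let partial (q : T1 * T2) := \int[m1]_x' f (q.1, x', q.2).

Let measurable_partial : measurable_fun setT partial.
Proof.
apply: (measurable_fun_fubini_tonelli_F
  (fun q : T1 * T2 * T1 => f (q.1.1, q.2, q.1.2))); last by move=> ?; exact: f0.
apply: measurableT_comp mf _.
apply/measurable_fun_pairP; split; [apply/measurable_fun_pairP; split|].
- exact: measurableT_comp measurable_fst measurable_fst.
- exact: measurable_snd.
- exact: measurableT_comp measurable_snd measurable_fst.
Qed.

Lemma fubini_tonelli_iterated :
  \int[m1]_x \int[m1]_x' \int[m2]_y f (x, x', y) =
  \int[m2]_y \int[m1]_x \int[m1]_x' f (x, x', y).
Proof.
transitivity (\int[m1]_x \int[m2]_y partial (x, y)).
  apply: eq_integral => x _.
  apply: (fubini_tonelli (fun q : T1 * T2 => f (x, q.1, q.2)));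
    last by move=> ?; exact: f0.
  apply: measurableT_comp mf _.
  apply/measurable_fun_pairP; split; [apply/measurable_fun_pairP; split|].
  - exact: measurable_cst.
  - exact: measurable_fst.
  - exact: measurable_snd.
apply: (fubini_tonelli partial measurable_partial) => q.
exact: integral_ge0.
Qed.

Lemma measurable_fun_iterated_integral :
  measurable_fun setT (fun y => \int[m1]_x \int[m1]_x' f (x, x', y)).
Proof.
apply: (measurable_fun_fubini_tonelli_G partial measurable_partial) => q.
exact: integral_ge0.
Qed.

End iterated_fubini_tonelli.

Lemma integrable_unit_valued d (T : measurableType d) (R : realType)
  (mu : {finite_measure set T -> \bar R}) (g : T -> R) :
  measurable_fun setT g -> (forall x, 0 <= g x <= 1)%R ->
  mu.-integrable setT (EFin \o g).
Proof.
move=> mg g01.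
apply: (le_integrable measurableT _ _ (finite_measure_integrable_cst mu 1 measurableT)).
- exact/measurable_EFinP.
- by move=> x _ /=; have /andP[g0 g1] := g01 x; rewrite lee_fin normr1 ger0_norm.
Qed.

Lemma le_integral_lincomb d (T : measurableType d) (R : realType)
  (mu : {measure set T -> \bar R}) (t e u : T -> R) (a b : R) :
  mu.-integrable setT (EFin \o t) -> mu.-integrable setT (EFin \o e) ->
  mu.-integrable setT (EFin \o u) ->
  (forall x, t x <= a * (e x - b * u x))%R ->
  \int[mu]_x (t x)%:E <=
  a%:E * (\int[mu]_x (e x)%:E - b%:E * \int[mu]_x (u x)%:E).
Proof.
move=> it ie iu tle.
have ibu : mu.-integrable setT (EFin \o (fun x => b * u x)%R).
  apply: (eq_integrable measurableT (fun x => b%:E * (u x)%:E));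
    last exact: integrableZl.
  by move=> x _; rewrite /= EFinM.
have ieu : mu.-integrable setT (EFin \o (fun x => e x - b * u x)%R).
  apply: (eq_integrable measurableT ((EFin \o e) \- (EFin \o (fun x => b * u x)%R))).
    by move=> x _; rewrite /= EFinB.
  exact: integrableB.
rewrite -(integralZl measurableT iu).
under [X in _ - X]eq_integral do rewrite /= -EFinM.
rewrite -integralB_EFin // -(integralZl measurableT ieu).
apply: le_integral => //; first exact: integrableZl.
by move=> x _; rewrite /= -EFinM lee_fin.
Qed.

Lemma measurable_fun_neq_label d (T : measurableType d) (R : realType) (k : nat)
  (f g : T -> label k) : measurable_fun setT f -> measurable_fun setT g ->
  measurable_fun setT (fun t => ((f t != g t)%:R : R)).
Proof.
move=> mf mg.
(* label k and bool carry the discrete sigma-algebra. *)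
have mval : measurable_fun setT (@nat_of_ord k.+2 : label k -> nat) by [].
apply: (measurableT_comp (f := fun b : bool => (b%:R : R))) => //.
apply: measurable_neg.
exact: measurable_fun_eqn (measurableT_comp mval mf) (measurableT_comp mval mg).
Qed.

Section gibbs_classifier.
Context (R : realType) (k : nat) (dX : measure_display) (X : measurableType dX)
  (dH : measure_display) (H : measurableType dH).
Variable c : H -> X -> label k.
Hypothesis hc : measurable_fun setT (fun p : H * X => c p.1 p.2).
Variables (D : probability (X * label k)%type R) (rho : probability H R).

Local Notation vote z := (fin_pmf rho (fun h => c h z.1)).

Let measurable_fun_c d (T : measurableType d) (a : T -> H) (b : T -> X) :
  measurable_fun setT a -> measurable_fun setT b ->
  measurable_fun setT (fun t => c (a t) (b t)).
Proof. by move=> ma mb; exact: measurableT_comp hc (measurable_fun_pair ma mb). Qed.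

Let measurable_fiber x j : measurable ((fun h => c h x) @^-1` [set j]).
Proof.
have mcx : measurable_fun setT (fun h => c h x).
  exact: (measurable_fun_pair1 x hc).
by rewrite -[X in measurable X]setTI; exact: mcx.
Qed.

Let sum_vote (z : X * label k) : (\sum_j vote z j)%R = 1%R.
Proof. exact: sum_fin_pmf. Qed.

Let vote_ge0 (z : X * label k) j : (0 <= vote z j)%R.
Proof. exact: fin_pmf_ge0. Qed.

Let errE (z : X * label k) :
  \int[rho]_h ((c h z.1 != z.2)%:R)%:E = (pmf_err (vote z) z.2)%:E.
Proof. exact: integral_fin_valued. Qed.

Let tandemE (z : X * label k) :
  \int[rho]_h \int[rho]_h' ((c h z.1 != z.2)%:R * (c h' z.1 != z.2)%:R)%:E =
  (pmf_tandem (vote z) z.2)%:E.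
Proof.
apply: (integral2_fin_valued rho (measurable_fiber z.1)
  (G := fun i j => (i != z.2)%:R * (j != z.2)%:R)%R) => i j.
by rewrite mulr_ge0.
Qed.

Let disagreementE (z : X * label k) :
  \int[rho]_h \int[rho]_h' ((c h z.1 != c h' z.1)%:R)%:E =
  (pmf_disagreement (vote z))%:E.
Proof.
exact: (integral2_fin_valued rho (measurable_fiber z.1) (G := fun i j => (i != j)%:R)).
Qed.

Let err_ind (q : H * (X * label k)) := ((c q.1 q.2.1 != q.2.2)%:R : R)%:E.

Let tandem_ind (q : H * H * (X * label k)) :=
  ((c q.1.1 q.2.1 != q.2.2)%:R * (c q.1.2 q.2.1 != q.2.2)%:R : R)%:E.

Let disagreement_ind (q : H * H * (X * label k)) :=
  ((c q.1.1 q.2.1 != c q.1.2 q.2.1)%:R : R)%:E.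

Let measurable_err_ind : measurable_fun setT err_ind.
Proof.
by apply/measurable_EFinP/measurable_fun_neq_label;
  do ?[apply: measurable_fun_c | exact: measurableT_comp].
Qed.

Let measurable_tandem_ind : measurable_fun setT tandem_ind.
Proof.
by apply/measurable_EFinP/measurable_funM; apply: measurable_fun_neq_label;
  do ?[apply: measurable_fun_c | exact: measurableT_comp].
Qed.

Let measurable_disagreement_ind : measurable_fun setT disagreement_ind.
Proof.
by apply/measurable_EFinP/measurable_fun_neq_label;
  do ?[apply: measurable_fun_c | exact: measurableT_comp].
Qed.

Lemma gibbs_err_rateE :
  \int[rho]_h err_rate D (c h) = \int[D]_z (pmf_err (vote z) z.2)%:E.
Proof.
rewrite (fubini_tonelli err_ind measurable_err_ind) => [|q].
  by apply: eq_integral => z _; exact: errE.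
by rewrite lee_fin.
Qed.

Lemma gibbs_tandem_lossE :
  \int[rho]_h \int[rho]_h' tandem_loss D (c h) (c h') =
  \int[D]_z (pmf_tandem (vote z) z.2)%:E.
Proof.
rewrite (fubini_tonelli_iterated rho D measurable_tandem_ind) => [|q].
  by apply: eq_integral => z _; exact: tandemE.
by rewrite lee_fin mulr_ge0.
Qed.

Lemma gibbs_disagreementE :
  \int[rho]_h \int[rho]_h' disagreement D (c h) (c h') =
  \int[D]_z (pmf_disagreement (vote z))%:E.
Proof.
rewrite (fubini_tonelli_iterated rho D measurable_disagreement_ind) => [|q].
  by apply: eq_integral => z _; exact: disagreementE.
by rewrite lee_fin.
Qed.

Lemma integrable_pmf_err :
  D.-integrable setT (EFin \o fun z => pmf_err (vote z) z.2).
Proof.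
apply: integrable_unit_valued => [|z].
  apply/measurable_EFinP; rewrite (_ : _ \o _ = fun z => \int[rho]_h err_ind (h, z)).
    by apply: measurable_fun_fubini_tonelli_G => // q; rewrite lee_fin.
  by apply/funext => z; rewrite errE.
by apply: convex_comb_in01 => // j; exact: natr_bool_in01.
Qed.

Lemma integrable_pmf_tandem :
  D.-integrable setT (EFin \o fun z => pmf_tandem (vote z) z.2).
Proof.
apply: integrable_unit_valued => [|z].
  apply/measurable_EFinP.
  rewrite (_ : _ \o _ = fun z => \int[rho]_h \int[rho]_h' tandem_ind (h, h', z)).
    apply: (measurable_fun_iterated_integral rho measurable_tandem_ind) => q.
    by rewrite lee_fin mulr_ge0.
  by apply/funext => z; rewrite tandemE.
apply: convex_comb2_in01 => // i j.
have /andP[? ?] := natr_bool_in01 R (i != z.2).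
have /andP[? ?] := natr_bool_in01 R (j != z.2).
by rewrite mulr_ge0 ?mulr_ile1.
Qed.

Lemma integrable_pmf_disagreement :
  D.-integrable setT (EFin \o fun z => pmf_disagreement (vote z)).
Proof.
apply: integrable_unit_valued => [|z].
  apply/measurable_EFinP.
  rewrite (_ : _ \o _ = fun z => \int[rho]_h \int[rho]_h' disagreement_ind (h, h', z)).
    apply: (measurable_fun_iterated_integral rho measurable_disagreement_ind).
    by move=> q; rewrite lee_fin.
  by apply/funext => z; rewrite disagreementE.
by apply: convex_comb2_in01 => // i j; exact: natr_bool_in01.
Qed.

Lemma pmf_vote_tandem_le (z : X * label k) :
  (pmf_tandem (vote z) z.2 <= 2 * (k.+2 - 1)%:R / k.+2%:R *
     (pmf_err (vote z) z.2 - 2^-1 * pmf_disagreement (vote z)))%R.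
Proof. by have := pmf_tandem_le z.2 (sum_vote z); rewrite card_ord. Qed.

End gibbs_classifier.

Theorem lemma4 (R : realType) (k : nat)
  (dX : measure_display) (X : measurableType dX)
  (dH : measure_display) (H : measurableType dH)
  (c : H -> X -> label k)
  (hc : measurable_fun setT (fun p : H * X => c p.1 p.2))
  (D : probability (X * label k)%type R) (rho : probability H R) :
  \int[rho]_h \int[rho]_h' tandem_loss D (c h) (c h')
  <= ((2 * (k.+2 - 1)%:R / k.+2%:R)%R)%:E *
     (\int[rho]_h err_rate D (c h)
      - (2^-1)%:E * \int[rho]_h \int[rho]_h' disagreement D (c h) (c h')).
Proof.
rewrite (gibbs_tandem_lossE hc) (gibbs_err_rateE hc) (gibbs_disagreementE hc).
apply: le_integral_lincomb.
- exact: integrable_pmf_tandem.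
- exact: integrable_pmf_err.
- exact: integrable_pmf_disagreement.
- exact: pmf_vote_tandem_le.
Qed.
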